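(* Let $n\ge 1$, $\nu>0$, and let $\alpha_u,\alpha_y\ge 0$ with $\max\{\alpha_u,\alpha_y\}>0$. Let $M\in\mathbb{R}^{n\times n}$ be a diagonal matrix with positive diagonal entries, let $L\in\mathbb{R}^{n\times n}$, and let $\Pi_k\in\mathbb{R}^{n\times n}$ be a diagonal matrix whose diagonal entries all lie in $\{0,1\}$. Set $$\gamma_1=\frac{\alpha_y^2\nu}{\alpha_y^2\nu+\alpha_u^2},\qquad \gamma_2=\frac{\alpha_u^2}{\alpha_y^2\nu+\alpha_u^2},$$ $$\mathbb{S}_k=\nu LM^{-1}L^T+M-\frac{1}{\alpha_y^2\nu+\alpha_u^2}\,(\alpha_y\nu LM^{-1}-\alpha_u I)\,\Pi_k M\Pi_k\,(\alpha_y\nu LM^{-1}-\alpha_u I)^T,$$ $$L_1=\sqrt{\nu}\,L\,(I-\gamma_1\Pi_k)^{1/2}+(I-\gamma_2\Pi_k)^{1/2}M,\qquad \widehat{\mathbb{S}}_k=L_1M^{-1}L_1^T .$$ Then $$\widehat{\mathbb{S}}_k=\mathbb{S}_k+\sqrt{\nu}\,\big(L(I-\Pi_k)+(I-\Pi_k)L^T\big).$$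
   Context: Square roots of the diagonal matrices $I-\gamma_i\Pi_k$ (which have nonnegative diagonal entries since $0\le\gamma_i\le 1$) are taken entrywise. In the application, $M$ is a lumped mass matrix, $L$ the discretized convection–diffusion operator, and $\Pi_k$ the diagonal 0/1 indicator matrix of the current active set $\mathcal{A}_k\subseteq\{1,\dots,n\}$ (i.e. $(\Pi_k)_{ii}=1$ iff $i\in\mathcal{A}_k$); $\mathbb{S}_k$ is a block of the active-set Schur complement and $\widehat{\mathbb{S}}_k$ its factorized approximation. *)

From HB Require Import structures.
From mathcomp Require Import all_boot all_order all_algebra.
From mathcomp Require Import reals.
Set Implicit Arguments. Unset Strict Implicit. Unset Printing Implicit Defensive.
Import Order.TTheory GRing.Theory Num.Theory.
Local Open Scope ring_scope.

(* Entrywise square root of a matrix (used on the diagonal matrices I - gamma_i Pi_k). *)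
Definition mxsqrt_entrywise (R : rcfType) (n : nat) (D : 'M[R]_n) : 'M[R]_n :=
  map_mx (@Num.sqrt R) D.

(* Since M, M^-1, Pi_k and the two square roots are diagonal, every matrix in
   sight has the form L D1 L^T + L D2 + D3 L^T + D4 with diagonal D_i, and
   both sides can be compared coefficient by coefficient, entrywise.  Where
   Pi_k is 0 the identity is immediate; where it is 1 it rests on
   gamma1 + gamma2 = 1, so that sqrt(1 - gamma1) sqrt(1 - gamma2)
   = sqrt(gamma1 gamma2) = alpha_u alpha_y sqrt(nu) / c. *)

From HB Require Import structures.
From mathcomp Require Import all_boot all_order all_algebra.
From mathcomp Require Import reals ring lra.
Set Implicit Arguments. Unset Strict Implicit. Unset Printing Implicit Defensive.
Import Order.TTheory GRing.Theory Num.Theory.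
Local Open Scope ring_scope.

Section LForm.
Variables (R : comNzRingType) (n : nat).
Implicit Types (u v w z : 'rV[R]_n) (L : 'M[R]_n).

Definition hadamard u v : 'rV[R]_n := \row_k (u 0 k * v 0 k).

Lemma diag_mx_mul u v : diag_mx u *m diag_mx v = diag_mx (hadamard u v).
Proof. exact: mulmx_diag. Qed.

Lemma diag_mx_mulA u v m (X : 'M[R]_(n, m)) :
  diag_mx u *m (diag_mx v *m X) = diag_mx (hadamard u v) *m X.
Proof. by rewrite mulmxA diag_mx_mul. Qed.

Lemma scale_mul_diag_mx L k u : k *: (L *m diag_mx u) = L *m diag_mx (k *: u).
Proof. by rewrite scalemxAr -linearZ. Qed.

Definition Lform L u v w z :=
  L *m diag_mx u *m L^T + L *m diag_mx v + diag_mx w *m L^T + diag_mx z.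

Lemma eq_Lform L u v w z u' v' w' z' :
  u = u' -> v = v' -> w = w' -> z = z' -> Lform L u v w z = Lform L u' v' w' z'.
Proof. by move=> -> -> -> ->. Qed.

Lemma LformD L u v w z u' v' w' z' :
  Lform L u v w z + Lform L u' v' w' z' = Lform L (u + u') (v + v') (w + w') (z + z').
Proof.
rewrite /Lform !linearD /= !mulmxDl.
by rewrite addrACA; congr (_ + _); rewrite addrACA; congr (_ + _); rewrite addrACA.
Qed.

Lemma LformZ L k u v w z :
  k *: Lform L u v w z = Lform L (k *: u) (k *: v) (k *: w) (k *: z).
Proof. by rewrite /Lform !scalerDr !linearZ /= !scalemxAl. Qed.

Lemma Lform_mul L a b d a' b' :
  (L *m diag_mx a + diag_mx b) *m diag_mx d *m (diag_mx a' *m L^T + diag_mx b') =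
  Lform L (hadamard (hadamard a d) a') (hadamard (hadamard a d) b')
          (hadamard (hadamard b d) a') (hadamard (hadamard b d) b').
Proof.
rewrite /Lform !mulmxDl !mulmxDr -!mulmxA !diag_mx_mulA diag_mx_mul !mulmxA.
by rewrite diag_mx_mul addrA.
Qed.

Lemma Lform_quad L u : Lform L u 0 0 0 = L *m diag_mx u *m L^T.
Proof. by rewrite /Lform linear0 mulmx0 mul0mx !addr0. Qed.

Lemma Lform_diag L z : Lform L 0 0 0 z = diag_mx z.
Proof. by rewrite /Lform linear0 mulmx0 !mul0mx !add0r. Qed.

Lemma Lform_sym L v : Lform L 0 v v 0 = L *m diag_mx v + diag_mx v *m L^T.
Proof. by rewrite /Lform linear0 mulmx0 mul0mx add0r addr0. Qed.

Lemma trmx_Ldiag L u v : (L *m diag_mx u + diag_mx v)^T = diag_mx u *m L^T + diag_mx v.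
Proof. by rewrite linearD /= trmx_mul !tr_diag_mx. Qed.

End LForm.

Lemma invmx_diag (F : fieldType) n (d : 'rV[F]_n) :
  (forall i, d 0 i != 0) -> invmx (diag_mx d) = diag_mx (map_mx GRing.inv d).
Proof.
move=> d_neq0; have d_unit : diag_mx d \in unitmx.
  by rewrite unitmxE det_diag unitfE; apply/prodf_neq0 => i _.
have dV : diag_mx d *m diag_mx (map_mx GRing.inv d) = 1%:M.
  by rewrite mulmx_diag -diag_const_mx; congr diag_mx; apply/rowP => i; rewrite !mxE mulfV.
by rewrite -[invmx _]mulmx1 -dV mulmxA mulVmx // mul1mx.
Qed.

Lemma mxsqrt_diag (R : rcfType) n (d : 'rV[R]_n) :
  mxsqrt_entrywise (diag_mx d) = diag_mx (map_mx Num.sqrt d).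
Proof.
by apply/matrixP => i j; rewrite !mxE; case: (i == j); rewrite ?mulr1n ?mulr0n ?sqrtr0.
Qed.

Lemma sqr_weights_gt0 (R : realDomainType) (nu au ay : R) :
  0 < nu -> 0 <= au -> 0 <= ay -> 0 < Num.max au ay -> 0 < ay ^+ 2 * nu + au ^+ 2.
Proof.
move=> nu_gt0 au_ge0 ay_ge0; rewrite lt_max => /orP[au_gt0|ay_gt0].
  have : 0 <= ay ^+ 2 * nu by rewrite mulr_ge0 ?sqr_ge0 ?ltW.
  have : 0 < au ^+ 2 by rewrite exprn_gt0.
  lra.
have : 0 < ay ^+ 2 * nu by rewrite mulr_gt0 ?exprn_gt0.
have : 0 <= au ^+ 2 by rewrite sqr_ge0.
lra.
Qed.

Lemma sqrt_1_sub_ratio (R : rcfType) (a b : R) :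
  0 <= a -> 0 < a + b -> Num.sqrt (1 - b / (a + b)) = Num.sqrt a / Num.sqrt (a + b).
Proof.
move=> a_ge0 ab_gt0; have ab_neq0 : a + b != 0 by rewrite gt_eqF.
have -> : 1 - b / (a + b) = a / (a + b) by field.
by rewrite sqrtrM // sqrtrV // ltW.
Qed.

Section Weights.
Variables (R : rcfType) (nu au ay : R).
Hypotheses (nu_gt0 : 0 < nu) (au_ge0 : 0 <= au) (ay_ge0 : 0 <= ay)
  (c_gt0 : 0 < ay ^+ 2 * nu + au ^+ 2).
Let c := ay ^+ 2 * nu + au ^+ 2.
Let g1 := ay ^+ 2 * nu / c.
Let g2 := au ^+ 2 / c.
Let s := Num.sqrt nu.

Lemma sqrt_1_sub_g1 : Num.sqrt (1 - g1) = au / Num.sqrt c.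
Proof.
rewrite /g1 /c [ay ^+ 2 * nu + _]addrC sqrt_1_sub_ratio ?sqr_ge0 // 1?addrC //.
by rewrite sqrtr_sqr ger0_norm.
Qed.

Lemma sqrt_1_sub_g2 : Num.sqrt (1 - g2) = ay * s / Num.sqrt c.
Proof.
have ay2nu_ge0 : 0 <= ay ^+ 2 * nu by rewrite mulr_ge0 ?sqr_ge0 ?ltW.
by rewrite /g2 sqrt_1_sub_ratio // sqrtrM ?sqr_ge0 // sqrtr_sqr ger0_norm.
Qed.

(* The diagonal coefficients of both sides of the theorem at an entry with
   M_kk = m and (Pi_k)_kk = p, written only up to commutative normalization
   (lra matches them against the actual entries); the L^T-coefficient equals
   the L-coefficient. *)
Lemma Lform_coefficients (m p : R) : m != 0 -> p = 0 \/ p = 1 ->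
  [/\ s * Num.sqrt (1 - g1 * p) * (s * Num.sqrt (1 - g1 * p)) / m
         = nu / m - c^-1 * (ay * nu) ^+ 2 * (p * m * p) / m / m,
      s * Num.sqrt (1 - g1 * p) * (Num.sqrt (1 - g2 * p) * m) / m
         = s * (1 - p) + c^-1 * ay * nu * au * (p * m * p) / m
    & Num.sqrt (1 - g2 * p) * m * (Num.sqrt (1 - g2 * p) * m) / m
         = m - c^-1 * au ^+ 2 * (p * m * p)].
Proof.
move=> m_neq0 p01; have c_neq0 : c != 0 by rewrite gt_eqF.
have s2 : s ^+ 2 = nu by rewrite sqr_sqrtr // ltW.
have sq_r (g : R) : g <= 1 -> Num.sqrt (1 - g) ^+ 2 = 1 - g.
  by move=> g_le1; rewrite sqr_sqrtr // subr_ge0.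
have g1_le1 : g1 <= 1 by rewrite /g1 ler_pdivrMr // mul1r lerDl sqr_ge0.
have g2_le1 : g2 <= 1 by rewrite /g2 ler_pdivrMr // mul1r lerDr mulr_ge0 ?sqr_ge0 ?ltW.
case: p01 => ->; rewrite ?mulr0 ?subr0 ?sqrtr1 ?mulr1.
  by split; rewrite -?s2; field; rewrite m_neq0.
split.
- by rewrite mulrACA -!expr2 s2 sq_r // /g1; field; rewrite m_neq0 c_neq0.
- rewrite sqrt_1_sub_g1 sqrt_1_sub_g2; set t := Num.sqrt c.
  have ct : c = t ^+ 2 by rewrite sqr_sqrtr // ltW.
  have t_neq0 : t != 0 by rewrite sqrtr_eq0 -ltNge.
  by rewrite ct -s2; field; rewrite m_neq0 t_neq0.
- by rewrite mulrACA -!expr2 sq_r // /g2; field; rewrite m_neq0 c_neq0.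
Qed.
End Weights.

Theorem proposition4p1 (R : realType) (n : nat) (hn : (1 <= n)%N)
  (nu au ay : R) (M L P : 'M[R]_n) :
  0 < nu -> 0 <= au -> 0 <= ay -> 0 < Num.max au ay ->
  is_diag_mx M -> (forall i, 0 < M i i) ->
  is_diag_mx P -> (forall i, P i i = 0 \/ P i i = 1) ->
  let c := ay ^+ 2 * nu + au ^+ 2 in
  let g1 := ay ^+ 2 * nu / c in
  let g2 := au ^+ 2 / c in
  let Mi := invmx M in
  let B := ay * nu *: (L *m Mi) - au *: 1%:M in
  let S := nu *: (L *m Mi *m L^T) + M - c^-1 *: (B *m P *m M *m P *m B^T) in
  let L1 := Num.sqrt nu *: (L *m mxsqrt_entrywise (1%:M - g1 *: P))
            + mxsqrt_entrywise (1%:M - g2 *: P) *m M in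
  let Shat := L1 *m Mi *m L1^T in
  Shat = S + Num.sqrt nu *: (L *m (1%:M - P) + (1%:M - P) *m L^T).
Proof.
move=> nu_gt0 au_ge0 ay_ge0 max_gt0 /diag_mxP[m ->] M_gt0 /diag_mxP[p ->] P01.
move=> c g1 g2 Mi B S L1 Shat.
have m_neq0 k : m 0 k != 0 by have := M_gt0 k; rewrite mxE eqxx mulr1n => /gt_eqF->.
have p01 k : p 0 k = 0 \/ p 0 k = 1 by have := P01 k; rewrite mxE eqxx mulr1n.
have c_gt0 : 0 < c by exact: sqr_weights_gt0.
have MiE : Mi = diag_mx (map_mx GRing.inv m) by exact: invmx_diag.
have diag_1_sub (d : 'rV[R]_n) : 1%:M - diag_mx d = diag_mx (const_mx 1 - d).
  by rewrite raddfB /= diag_const_mx.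
have L1E : L1 = L *m diag_mx (Num.sqrt nu *: map_mx Num.sqrt (const_mx 1 - g1 *: p))
                + diag_mx (hadamard (map_mx Num.sqrt (const_mx 1 - g2 *: p)) m).
  rewrite /L1 -![_ *: diag_mx p]linearZ !diag_1_sub !mxsqrt_diag.
  by rewrite scale_mul_diag_mx diag_mx_mul.
have BE : B = L *m diag_mx ((ay * nu) *: map_mx GRing.inv m) + diag_mx (- au *: const_mx 1).
  rewrite /B MiE scale_mul_diag_mx -diag_const_mx.
  by rewrite [diag_mx (- au *: _)]linearZ /= scaleNr.
have PMP : B *m diag_mx p *m diag_mx m *m diag_mx p *m B^T
           = B *m diag_mx (hadamard (hadamard p m) p) *m B^T.
  by rewrite -!mulmxA !diag_mx_mulA.
rewrite /Shat /S L1E trmx_Ldiag MiE Lform_mul PMP BE trmx_Ldiag Lform_mul.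
rewrite -Lform_quad -(Lform_diag L) diag_1_sub -Lform_sym.
rewrite -[- (_ *: Lform _ _ _ _ _)]scaleNr !LformZ !LformD.
apply: eq_Lform; apply/rowP => k; rewrite /hadamard !mxE.
all: have [] := Lform_coefficients nu_gt0 au_ge0 ay_ge0 c_gt0 (m_neq0 k) (p01 k).
all: rewrite /g1 /g2 /c; lra.
Qed.
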